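(* For every formula $\varphi$, if $\vdash_{\mathbf{PTKv}^{-}}\varphi$ then $\varphi$ is valid (true at every world of every model).
   Context: Fix a countable set $\mathsf{Prop}$ of propositional variables, a countable set $\mathsf{Term}$ of atomic terms, and a finite set of agents $\mathcal{A}=\{1,\dots,n\}$. Let $\Theta_K=[0,1]\cap\mathbb{Q}$ and $\Theta_V^+=(\frac12,1]\cap\mathbb{Q}$. Formulas are generated by $\varphi::= p\mid t=s\mid\neg\varphi\mid(\varphi\to\psi)\mid K_i^\theta\varphi\mid Kv_i^\eta(t)$ with $p\in\mathsf{Prop}$, $t,s\in\mathsf{Term}$, $i\in\mathcal{A}$, $\theta\in\Theta_K$, $\eta\in\Theta_V^+$; other connectives are standard abbreviations. A model is $M=(W,D,\{P_i\}_{i\in\mathcal{A}},V,\mathsf{val})$ with $W\neq\emptyset$, $D\neq\emptyset$, $P_i(w)$ a countably additive probability measure on the powerset of $W$ for each $i,w$, $V:W\times\mathsf{Prop}\to\{0,1\}$, $\mathsf{val}:W\times\mathsf{Term}\to D$. Write $\llbracket\varphi\rrbracket^M=\{u\mid M,u\models\varphi\}$ and $\llbracket t=d\rrbracket^M=\{u\mid \mathsf{val}(u,t)=d\}$. Satisfaction: $M,w\models p$ iff $V(w,p)=1$; $M,w\models t=s$ iff $\mathsf{val}(w,t)=\mathsf{val}(w,s)$; Boolean clauses as usual; $M,w\models K_i^\theta\varphi$ iff $P_i(w)(\llbracket\varphi\rrbracket^M)\ge\theta$; $M,w\models Kv_i^\eta(t)$ iff there exists a unique $d\in D$ with $P_i(w)(\llbracket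 t=d\rrbracket^M)\ge\eta$. The system $\mathbf{PTKv}^{-}$ has rules Modus Ponens (from $\varphi$ and $\varphi\to\psi$ infer $\psi$) and $\mathrm{Nec}_K$ (from $\varphi$ infer $K_i^\theta\varphi$, for all $i\in\mathcal{A}$, $\theta\in\Theta_K$), and axiom schemata (for all agents $i$, terms $t,s,u$, formulas $\varphi,\psi$): all propositional tautologies; $t=t$; $t=s\to s=t$; $(t=s\wedge s=u)\to t=u$; $t=s\to((t=u)\leftrightarrow(s=u))$; $K_i^{\theta'}\varphi\to K_i^\theta\varphi$ for $\theta\le\theta'$ in $\Theta_K$; $K_i^\alpha(\varphi\to\psi)\to(K_i^\beta\varphi\to K_i^{\max\{0,\alpha+\beta-1\}}\psi)$ for $\alpha,\beta\in\Theta_K$; $K_i^\alpha\varphi\to\neg K_i^\beta\neg\varphi$ for $\alpha,\beta\in\Theta_K$ with $\alpha+\beta>1$; $K_i^0\varphi$; $K_i^1(t=s)\to(K_i^\theta(t=u)\leftrightarrow K_i^\theta(s=u))$ for $\theta\in\Theta_K$; $K_i^1(t=s)\to(Kv_i^\eta(t)\leftrightarrow Kv_i^\eta(s))$ for $\eta\in\Theta_V^+$. *)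

From Stdlib Require Import Reals QArith Qminmax Qreals.
From Stdlib Require Vectors.Fin.
Open Scope R_scope.

(* Propositional variables and atomic terms: countable sets, taken to be nat.
   Agents: {1,...,n} represented as Fin.t n. *)
Definition prop_var := nat.
Definition term := nat.
Definition agent (n : nat) := Fin.t n.

Definition thetaK := { q : Q | (0 <= q /\ q <= 1)%Q }.
Definition thetaV := { q : Q | (1 # 2 < q /\ q <= 1)%Q }.
Definition qK (a : thetaK) : Q := proj1_sig a.
Definition qV (a : thetaV) : Q := proj1_sig a.

Inductive form (n : nat) : Type :=
| FVar : prop_var -> form n
| FEq  : term -> term -> form n
| FNeg : form n -> form n
| FImp : form n -> form n -> form n
| FK   : agent n -> thetaK -> form n -> form n
| FKv  : agent n -> thetaV -> term -> form n.

Arguments FVar {n}. Arguments FEq {n}. Arguments FNeg {n}.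
Arguments FImp {n}. Arguments FK {n}. Arguments FKv {n}.

Definition FAnd {n} (a b : form n) : form n := FNeg (FImp a (FNeg b)).
Definition FIff {n} (a b : form n) : form n := FAnd (FImp a b) (FImp b a).

(* Countably additive probability measure on the powerset of W
   (subsets represented as predicates W -> Prop). *)
Definition is_prob_measure (W : Type) (mu : (W -> Prop) -> R) : Prop :=
  (forall A B : W -> Prop, (forall w, A w <-> B w) -> mu A = mu B) /\
  (forall A, 0 <= mu A) /\
  mu (fun _ => True) = 1 /\
  (forall A : nat -> W -> Prop,
      (forall i j w, i <> j -> A i w -> A j w -> False) ->
      infinite_sum (fun k => mu (A k)) (mu (fun w => exists k, A k w))).

Record model (n : nat) : Type := Model {
  mW : Type;
  mD : Type;
  mW_inh : mW;
  mD_inh : mD;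
  mP : agent n -> mW -> (mW -> Prop) -> R;
  mP_prob : forall i w, is_prob_measure mW (mP i w);
  mV : mW -> prop_var -> bool;
  mval : mW -> term -> mD
}.

Arguments mW {n}. Arguments mD {n}. Arguments mP {n}.
Arguments mV {n}. Arguments mval {n}.

Fixpoint sat {n} (M : model n) (w : mW M) (f : form n) : Prop :=
  match f with
  | FVar p => mV M w p = true
  | FEq t s => mval M w t = mval M w s
  | FNeg a => ~ sat M w a
  | FImp a b => sat M w a -> sat M w b
  | FK i th a => mP M i w (fun u => sat M u a) >= Q2R (qK th)
  | FKv i eta t =>
      exists d : mD M,
        mP M i w (fun u => mval M u t = d) >= Q2R (qV eta) /\
        forall d' : mD M, mP M i w (fun u => mval M u t = d') >= Q2R (qV eta) -> d' = d
  end.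

Definition valid {n} (f : form n) : Prop :=
  forall (M : model n) (w : mW M), sat M w f.

(* Propositional tautologies: true under every Boolean valuation of the
   non-Boolean subformulas (variables, equations, K- and Kv-formulas). *)
Fixpoint beval {n} (v : form n -> bool) (f : form n) : bool :=
  match f with
  | FNeg a => negb (beval v a)
  | FImp a b => implb (beval v a) (beval v b)
  | _ => v f
  end.

Definition tautology {n} (f : form n) : Prop :=
  forall v : form n -> bool, beval v f = true.

Inductive provable {n : nat} : form n -> Prop :=
| ax_taut : forall f, tautology f -> provable f
| ax_refl : forall t, provable (FEq t t)
| ax_sym : forall t s, provable (FImp (FEq t s) (FEq s t))
| ax_trans : forall t s u, provable (FImp (FAnd (FEq t s) (FEq s u)) (FEq t u))
| ax_subst : forall t s u, provable (FImp (FEq t s) (FIff (FEq t u) (FEq s u)))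
| ax_mono : forall i (th th' : thetaK) f,
    (qK th <= qK th')%Q -> provable (FImp (FK i th' f) (FK i th f))
| ax_K : forall i (al be ga : thetaK) f g,
    (qK ga == Qmax 0 (qK al + qK be - 1))%Q ->
    provable (FImp (FK i al (FImp f g)) (FImp (FK i be f) (FK i ga g)))
| ax_cons : forall i (al be : thetaK) f,
    (1 < qK al + qK be)%Q ->
    provable (FImp (FK i al f) (FNeg (FK i be (FNeg f))))
| ax_K0 : forall i (z : thetaK) f, (qK z == 0)%Q -> provable (FK i z f)
| ax_Keq : forall i (one th : thetaK) t s u, (qK one == 1)%Q ->
    provable (FImp (FK i one (FEq t s)) (FIff (FK i th (FEq t u)) (FK i th (FEq s u))))
| ax_Kveq : forall i (one : thetaK) (eta : thetaV) t s, (qK one == 1)%Q ->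
    provable (FImp (FK i one (FEq t s)) (FIff (FKv i eta t) (FKv i eta s)))
| rule_MP : forall f g, provable f -> provable (FImp f g) -> provable g
| rule_Nec : forall i (th : thetaK) f, provable f -> provable (FK i th f).

(* The probabilistic axioms are facts about a
   single measure [P_i(w)]: finite additivity (a consequence of countable
   additivity) gives the complement law behind the consistency axiom and the
   Fréchet bound [P(A /\ B) >= P(A) + P(B) - 1] behind the distribution axiom,
   and an event of probability 1 cannot separate two events that agree on it,
   which validates the substitution axioms for [K_i^1 (t = s)]. *)

From Stdlib Require Import Reals QArith Qminmax Qreals Bool Lra Lia Classical
  ClassicalEpsilon.
Open Scope R_scope.

Lemma infinite_sum_const_eq0 (c l : R) : infinite_sum (fun _ => c) l -> c = 0.
Proof.
  (* Consecutive partial sums differ by [c] but both lie within [|c|/2] of [l]. *)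
  intros hsum; apply NNPP; intros hc.
  destruct (hsum (Rabs c / 2)) as [N hN]; [apply Rabs_pos_lt in hc; lra|].
  pose proof (hN N (le_n N)) as hN0; pose proof (hN (S N) (le_S _ _ (le_n N))) as hN1.
  unfold Rdist in hN0, hN1; simpl sum_f_R0 in hN1.
  set (a := sum_f_R0 (fun _ => c) N - l) in *.
  pose proof (Rabs_triang (sum_f_R0 (fun _ => c) N + c - l) (- a)) as htri.
  rewrite Rabs_Ropp in htri.
  replace (sum_f_R0 (fun _ => c) N + c - l + - a) with c in htri by (unfold a; ring).
  lra.
Qed.

Lemma Q2R_Qmax_lub (q r : Q) (x : R) :
  Q2R q <= x -> Q2R r <= x -> Q2R (Qmax q r) <= x.
Proof. destruct (Q.max_dec q r) as [e|e]; rewrite (Qeq_eqR _ _ e); auto. Qed.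

Section ProbabilityMeasure.
Variable W : Type.
Variable mu : (W -> Prop) -> R.
Hypothesis mu_prob : is_prob_measure W mu.

Lemma prob_ext A B : (forall w, A w <-> B w) -> mu A = mu B.
Proof. apply mu_prob. Qed.

Lemma prob_ge0 A : 0 <= mu A.
Proof. apply mu_prob. Qed.

Lemma prob_total : mu (fun _ => True) = 1.
Proof. apply mu_prob. Qed.

Lemma prob_countable_additive (A : nat -> W -> Prop) :
  (forall i j w, i <> j -> A i w -> A j w -> False) ->
  infinite_sum (fun k => mu (A k)) (mu (fun w => exists k, A k w)).
Proof. apply mu_prob. Qed.

Lemma prob_empty : mu (fun _ => False) = 0.
Proof.
  apply (infinite_sum_const_eq0 _ (mu (fun w => exists k : nat, False))).
  apply (prob_countable_additive (fun _ _ => False)); tauto.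
Qed.

Lemma prob_union A B : (forall w, A w -> B w -> False) ->
  mu (fun w => A w \/ B w) = mu A + mu B.
Proof.
  intros hdisj.
  set (F k := match k with O => A | S O => B | _ => fun _ => False end).
  assert (hF : infinite_sum (fun k => mu (F k)) (mu (fun w => exists k, F k w))).
  { apply prob_countable_additive.
    intros [|[|i]] [|[|j]] w hij; simpl; try tauto; try lia; eauto. }
  assert (hAB : infinite_sum (fun k => mu (F k)) (mu A + mu B)).
  { intros eps heps; exists 1%nat; intros k hk.
    replace (sum_f_R0 (fun k => mu (F k)) k) with (mu A + mu B).
    - unfold Rdist; rewrite Rminus_diag, Rabs_R0; lra.
    - induction k as [|[|k] IHk]; [lia | simpl; ring |].
      simpl sum_f_R0 in *; rewrite <- IHk by lia; simpl; rewrite prob_empty; ring. }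
  rewrite <- (uniqueness_sum _ _ _ hF hAB); apply prob_ext; intros w; split.
  - intros [hA|hB]; [exists 0%nat | exists 1%nat]; assumption.
  - intros [[|[|k]] hk]; simpl in hk; tauto.
Qed.

Lemma prob_split A B :
  mu A = mu (fun w => A w /\ B w) + mu (fun w => A w /\ ~ B w).
Proof.
  rewrite <- prob_union by tauto; apply prob_ext.
  intros w; generalize (classic (B w)); tauto.
Qed.

Lemma prob_compl A : mu A + mu (fun w => ~ A w) = 1.
Proof.
  rewrite <- prob_union, <- prob_total by tauto; apply prob_ext.
  intros w; generalize (classic (A w)); tauto.
Qed.

Lemma prob_le A B : (forall w, A w -> B w) -> mu A <= mu B.
Proof.
  intros hAB; rewrite (prob_split B A).
  rewrite (prob_ext A (fun w => B w /\ A w)) by firstorder.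
  generalize (prob_ge0 (fun w => B w /\ ~ A w)); lra.
Qed.

Lemma prob_le1 A : mu A <= 1.
Proof. rewrite <- prob_total; apply prob_le; tauto. Qed.

Lemma prob_inter_ge A B : mu A + mu B - 1 <= mu (fun w => A w /\ B w).
Proof.
  rewrite (prob_split A B).
  assert (hle : mu (fun w => A w /\ ~ B w) <= mu (fun w => ~ B w)) by (apply prob_le; tauto).
  generalize (prob_compl B); lra.
Qed.

Lemma prob_eq_on_full E A B : mu E = 1 ->
  (forall w, E w -> (A w <-> B w)) -> mu A = mu B.
Proof.
  intros hE hAB.
  assert (hnull : forall C, mu (fun w => C w /\ ~ E w) = 0).
  { intros C.
    assert (hle : mu (fun w => C w /\ ~ E w) <= mu (fun w => ~ E w))
      by (apply prob_le; tauto).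
    generalize (prob_compl E) (prob_ge0 (fun w => C w /\ ~ E w)); lra. }
  rewrite (prob_split A E), (prob_split B E), !hnull.
  f_equal; apply prob_ext; firstorder.
Qed.

End ProbabilityMeasure.

Section Soundness.
Variable n : nat.
Implicit Types (M : model n) (i : agent n) (f g : form n).

Definition sat_val M (w : mW M) (f : form n) : bool :=
  if excluded_middle_informative (sat M w f) then true else false.

Lemma sat_val_true M w f : sat_val M w f = true <-> sat M w f.
Proof. unfold sat_val; destruct excluded_middle_informative; intuition congruence. Qed.

Lemma beval_sat_val M w f : beval (sat_val M w) f = true <-> sat M w f.
Proof.
  induction f as [| | f IHf | f IHf g IHg | |]; simpl beval; try apply sat_val_true.
  - rewrite negb_true_iff, <- not_true_iff_false, IHf; reflexivity.
  - rewrite implb_true_iff, IHf, IHg; reflexivity.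
Qed.

Lemma sat_FAnd M w f g : sat M w (FAnd f g) <-> sat M w f /\ sat M w g.
Proof. simpl; generalize (classic (sat M w f)); tauto. Qed.

Lemma sat_FIff M w f g : sat M w (FIff f g) <-> (sat M w f <-> sat M w g).
Proof. unfold FIff; rewrite sat_FAnd; simpl; tauto. Qed.

Lemma mP_val_subst M i w t s (Phi : mD M -> mW M -> Prop) :
  mP M i w (fun u => mval M u t = mval M u s) >= 1 ->
  mP M i w (fun u => Phi (mval M u t) u) = mP M i w (fun u => Phi (mval M u s) u).
Proof.
  intros hts; pose proof (mP_prob _ M i w) as hP.
  apply (prob_eq_on_full _ _ hP (fun u => mval M u t = mval M u s)).
  - generalize (prob_le1 _ _ hP (fun u => mval M u t = mval M u s)); lra.
  - intros u ->; reflexivity.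
Qed.

Lemma valid_tautology f : tautology f -> valid f.
Proof. intros htaut M w; apply beval_sat_val, htaut. Qed.

Lemma valid_eq_trans t s u : @valid n (FImp (FAnd (FEq t s) (FEq s u)) (FEq t u)).
Proof. intros M w hand; apply sat_FAnd in hand; simpl in *; destruct hand; congruence. Qed.

Lemma valid_eq_subst t s u : @valid n (FImp (FEq t s) (FIff (FEq t u) (FEq s u))).
Proof. intros M w hts; rewrite sat_FIff; simpl in *; rewrite hts; reflexivity. Qed.

Lemma valid_K_mono i (th th' : thetaK) f :
  (qK th <= qK th')%Q -> valid (FImp (FK i th' f) (FK i th f)).
Proof. intros hle M w; simpl; apply Qle_Rle in hle; lra. Qed.

Lemma valid_K_dist i (al be ga : thetaK) f g :
  (qK ga == Qmax 0 (qK al + qK be - 1))%Q ->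
  valid (FImp (FK i al (FImp f g)) (FImp (FK i be f) (FK i ga g))).
Proof.
  intros hga M w; simpl; intros hfg hf; pose proof (mP_prob _ M i w) as hP.
  rewrite (Qeq_eqR _ _ hga); apply Rle_ge, Q2R_Qmax_lub.
  - rewrite RMicromega.Q2R_0; apply (prob_ge0 _ _ hP).
  - rewrite Q2R_minus, Q2R_plus, RMicromega.Q2R_1.
    assert (hle : mP M i w (fun u => (sat M u f -> sat M u g) /\ sat M u f)
                  <= mP M i w (fun u => sat M u g)) by (apply (prob_le _ _ hP); tauto).
    generalize (prob_inter_ge _ _ hP (fun u => sat M u f -> sat M u g) (fun u => sat M u f)).
    lra.
Qed.

Lemma valid_K_cons i (al be : thetaK) f :
  (1 < qK al + qK be)%Q -> valid (FImp (FK i al f) (FNeg (FK i be (FNeg f)))).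
Proof.
  intros hgt M w; simpl; apply Qlt_Rlt in hgt.
  rewrite Q2R_plus, RMicromega.Q2R_1 in hgt.
  generalize (prob_compl _ _ (mP_prob _ M i w) (fun u => sat M u f)); lra.
Qed.

Lemma valid_K0 i (z : thetaK) f : (qK z == 0)%Q -> valid (FK i z f).
Proof.
  intros hz M w; simpl; rewrite (Qeq_eqR _ _ hz), RMicromega.Q2R_0.
  apply Rle_ge, (prob_ge0 _ _ (mP_prob _ M i w)).
Qed.

Lemma valid_K1_eq_subst i (one th : thetaK) t s u : (qK one == 1)%Q ->
  valid (FImp (FK i one (FEq t s)) (FIff (FK i th (FEq t u)) (FK i th (FEq s u)))).
Proof.
  intros hone M w hts; rewrite sat_FIff; simpl in *.
  rewrite (Qeq_eqR _ _ hone), RMicromega.Q2R_1 in hts.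
  rewrite (mP_val_subst M i w t s (fun d x => d = mval M x u) hts); reflexivity.
Qed.

Lemma valid_K1_Kv_subst i (one : thetaK) (eta : thetaV) t s : (qK one == 1)%Q ->
  valid (FImp (FK i one (FEq t s)) (FIff (FKv i eta t) (FKv i eta s))).
Proof.
  intros hone M w hts; rewrite sat_FIff; simpl in *.
  rewrite (Qeq_eqR _ _ hone), RMicromega.Q2R_1 in hts.
  assert (hd : forall d, mP M i w (fun x => mval M x t = d) = mP M i w (fun x => mval M x s = d))
    by (intros d; exact (mP_val_subst M i w t s (fun e _ => e = d) hts)).
  setoid_rewrite hd; reflexivity.
Qed.

Lemma valid_MP f g : valid f -> valid (FImp f g) -> valid g.
Proof. intros hf hfg M w; exact (hfg M w (hf M w)). Qed.

Lemma valid_Nec i (th : thetaK) f : valid f -> valid (FK i th f).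
Proof.
  intros hf M w; simpl; pose proof (mP_prob _ M i w) as hP.
  rewrite (prob_ext _ _ hP _ (fun _ => True)), (prob_total _ _ hP) by firstorder.
  assert (hq1 : (qK th <= 1)%Q) by apply (proj2_sig th).
  apply Qle_Rle in hq1; rewrite RMicromega.Q2R_1 in hq1; lra.
Qed.

End Soundness.

Theorem theorem1 (n : nat) (f : form n) : provable f -> valid f.
Proof.
  induction 1.
  - apply valid_tautology; assumption.
  - intros M w; reflexivity.
  - intros M w; simpl; congruence.
  - apply valid_eq_trans.
  - apply valid_eq_subst.
  - apply valid_K_mono; assumption.
  - apply valid_K_dist; assumption.
  - apply valid_K_cons; assumption.
  - apply valid_K0; assumption.
  - apply valid_K1_eq_subst; assumption.
  - apply valid_K1_Kv_subst; assumption.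
  - eapply valid_MP; [| eassumption]; assumption.
  - apply valid_Nec; assumption.
Qed.
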